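(* Let $k\ge2$ and $\Delta\ge 2^{4^k+1}$ be integers. Let $Q=\{Q_1,\dots,Q_\Delta\}$ be an arbitrary multiset in $h_1(\Delta)$ (as defined in the context). Then there is a unique element $P_\infty\in Q$ that has multiplicity at least $\Delta-2^{4^k}$ in $Q$ and contains the trit sequence $11\dots1$ (of length $k$).
   Context: A trit sequence of length $k$ is a word $a_1\dots a_k$ with $a_j\in\{0,1,2\}$; it ''has an $i$ at position $j$'' if $a_j=i$. $h_1(\Delta)$ is the set of all multisets $\{W_1,\dots,W_\Delta\}$ (of cardinality $\Delta$) of sets $W_i$ of trit sequences of length $k$ such that (A) for any choice $w_1\in W_1,\dots,w_\Delta\in W_\Delta$ there is an index $1\le j\le k$ such that the number of $w_i$ with a $2$ at position $j$ is strictly greater than the number of $w_i$ with a $0$ at position $j$, and at most $k$ of the $w_i$ have a $0$ at position $j$; and (B) the multiset is maximal with property (A): adding any new trit sequence of length $k$ to any single $W_i$ yields a multiset violating (A). (This is the node-constraint of the problem obtained by applying one round of the simplified speedup transformation to superweak $k$-coloring.) *)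

From mathcomp Require Import all_boot.
Set Implicit Arguments. Unset Strict Implicit. Unset Printing Implicit Defensive.

Definition trit (k : nat) : finType := {ffun 'I_k -> 'I_3}.

(* A multiset {W_1,...,W_Delta} of sets of trit sequences is represented by
   an indexed family W : 'I_Delta -> {set trit k}; properties (A),(B) are
   invariant under reindexing, so this represents the multiset faithfully. *)
Definition tfamily (k D : nat) := {ffun 'I_D -> {set trit k}}.

Definition cnt (k D : nat) (w : 'I_D -> trit k) (j : 'I_k) (t : nat) : nat :=
  #|[set i : 'I_D | (w i j : nat) == t]|.

Definition propA (k D : nat) (W : tfamily k D) : Prop :=
  forall w : 'I_D -> trit k, (forall i, w i \in W i) ->
    exists j : 'I_k, cnt w j 0 < cnt w j 2 /\ cnt w j 0 <= k.

Definition add_to (k D : nat) (W : tfamily k D) (i : 'I_D) (t : trit k)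
  : tfamily k D :=
  [ffun i' => if i' == i then t |: W i else W i'].

Definition in_h1 (k D : nat) (W : tfamily k D) : Prop :=
  propA W /\
  forall (i : 'I_D) (t : trit k), t \notin W i -> ~ propA (add_to W i t).

Definition mult (k D : nat) (W : tfamily k D) (P : {set trit k}) : nat :=
  #|[set i : 'I_D | W i == P]|.

Definition ones (k : nat) : trit k := [ffun _ => inord 1].

From mathcomp Require Import all_boot perm zify.
From Stdlib Require Import Classical.
Set Implicit Arguments. Unset Strict Implicit. Unset Printing Implicit Defensive.

(* Call a choice [w] (with [w i \in Q i] for all [i]) bad if no position is
   good for it; (A) says that no bad choice exists.  By maximality (B), every
   [t \notin Q i] is the [i]-th entry of a bad choice whose other entries come
   from [Q].  In a bad choice only [2k^2] indices carry a trit other than 1 at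
   a position with at most [k] zeros, and only [k(k+1)] carry a 0 at a position
   with exactly [k+1] zeros; the entries at all other indices can be exchanged
   with 1...1 without creating a good position.  Played against (A), this shows
   that a class not containing 1...1 has multiplicity at most [2k^2+1], and
   that two distinct classes containing 1...1 cannot both be heavy, i.e. have
   multiplicity above [3k^2+k].  As there are only [2^(3^k)] sets of trit
   sequences, counting yields a heavy class, of multiplicity at least
   [D - 2^(3^k)(3k^2+k) >= D - 2^(4^k)]. *)

Definition mult_bound (k : nat) := k * (2 * k) + k * k.+1.

Lemma card_bigcup_le (I T : finType) (P : pred I) (F : I -> {set T}) :
  #|\bigcup_(i | P i) F i| <= \sum_(i | P i) #|F i|.
Proof.
apply: (big_ind2 (fun (A : {set T}) n => #|A| <= n)) => [|A1 n1 A2 n2 h1 h2|//].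
  by rewrite cards0.
exact: leq_trans (leq_card_setU A1 A2).1 (leq_add h1 h2).
Qed.

Lemma sum_le_card_mul (I : finType) (P : pred I) (F : I -> nat) c :
  (forall i, P i -> F i <= c) -> \sum_(i | P i) F i <= #|I| * c.
Proof.
move=> le_Fc; rewrite -sum_nat_const big_mkcond /=.
by apply: leq_sum => i _; case: ifP => // /le_Fc.
Qed.

Lemma ones_val k (j : 'I_k) : (ones k j : nat) = 1.
Proof. by rewrite ffunE inordK. Qed.

Section Choices.

Variables k D : nat.
Implicit Types (w : 'I_D -> trit k) (b : 'I_D) (j : 'I_k) (u : trit k).

Definition good_at w j := (cnt w j 0 < cnt w j 2) && (cnt w j 0 <= k).

Definition bad w := forall j, ~~ good_at w j.

Lemma propA_not_bad (W : tfamily k D) w :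
  propA W -> (forall i, w i \in W i) -> ~ bad w.
Proof. by move=> HA /HA [j [lt02 le0k]] /(_ j); rewrite /good_at lt02 le0k. Qed.

Definition set_choice w b u : 'I_D -> trit k :=
  fun i => if i == b then u else w i.

Lemma cnt_set_choice w b u j x :
  cnt (set_choice w b u) j x + ((w b j : nat) == x) = cnt w j x + ((u j : nat) == x).
Proof.
rewrite /cnt (cardsD1 b [set i | _]) (cardsD1 b [set i | (w i j : nat) == x]).
rewrite !inE /set_choice eqxx.
have -> : [set i | (((if i == b then u else w i) j : nat) == x)] :\ b
        = [set i | (w i j : nat) == x] :\ b.
  by apply/setP => i; rewrite !inE; case: (i == b).
lia.
Qed.

Lemma bad_set_choice w b u : bad w ->
  (forall j, cnt w j 0 <= k -> u j = w b j) ->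
  (forall j, k < cnt w j 0 -> (w b j : nat) = 0 -> (u j : nat) = 0 \/ k.+1 < cnt w j 0) ->
  bad (set_choice w b u).
Proof.
move=> bad_w light heavy j; rewrite /good_at.
have e0 := cnt_set_choice w b u j 0; have e2 := cnt_set_choice w b u j 2.
have [le0k|lt0k] := leqP (cnt w j 0) k.
  rewrite light // in e0 e2.
  have -> : cnt (set_choice w b u) j 0 = cnt w j 0 by lia.
  have -> : cnt (set_choice w b u) j 2 = cnt w j 2 by lia.
  exact: bad_w.
apply/negP => /andP [_ le0k'].
have [wb0|wbN0] := eqVneq (w b j : nat) 0; last by lia.
by have [u0|] := heavy j lt0k wb0; [rewrite u0 wb0 in e0|]; lia.
Qed.

Lemma cnt_perm w (s : {perm 'I_D}) j x : cnt (w \o s) j x = cnt w j x.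
Proof.
rewrite /cnt -(card_preimset [set i | (w i j : nat) == x] (@perm_inj _ s)).
by apply: eq_card => i; rewrite !inE.
Qed.

Lemma bad_perm w (s : {perm 'I_D}) : bad w -> bad (w \o s).
Proof. by move=> bad_w j; rewrite /good_at !cnt_perm; exact: bad_w. Qed.

Definition deviant w :=
  \bigcup_(j | cnt w j 0 <= k) [set b | (w b j : nat) != 1].

Definition critical w :=
  \bigcup_(j | cnt w j 0 == k.+1) [set b | (w b j : nat) == 0].

Lemma card_deviant w : bad w -> #|deviant w| <= k * (2 * k).
Proof.
move=> bad_w; apply: leq_trans (card_bigcup_le _ _) _.
rewrite -[k in k * _]card_ord; apply: sum_le_card_mul => j le0k.
have -> : [set b | (w b j : nat) != 1] =
          [set b | (w b j : nat) == 0] :|: [set b | (w b j : nat) == 2].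
  by apply/setP => b; rewrite !inE; case: (w b j) => [[|[|[|]]]].
apply: leq_trans (leq_card_setU _ _).1 _.
have := bad_w j; rewrite /good_at le0k andbT -leqNgt.
change (cnt w j 2 <= cnt w j 0 -> cnt w j 0 + cnt w j 2 <= 2 * k); lia.
Qed.

Lemma card_critical w : #|critical w| <= k * k.+1.
Proof.
apply: leq_trans (card_bigcup_le _ _) _.
by rewrite -[k in k * _]card_ord; apply: sum_le_card_mul => j /eqP <-.
Qed.

Lemma class_of_mult_gt0 (Q : tfamily k D) S : 0 < mult Q S -> exists i, Q i = S.
Proof. by rewrite card_gt0 => /set0Pn [i]; rewrite inE => /eqP; exists i. Qed.

Lemma sum_mult (Q : tfamily k D) : \sum_(S : {set trit k}) mult Q S = D.
Proof.
rewrite -[RHS]card_ord -sum1_card (partition_big Q predT) //=.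
by apply: eq_bigr => S _; rewrite sum1dep_card.
Qed.

Lemma card_sets : #|{set trit k}| = 2 ^ 3 ^ k.
Proof. by rewrite -cardsT -powersetT card_powerset cardsT card_ffun !card_ord. Qed.

Lemma exists_heavy (Q : tfamily k D) c :
  2 ^ 3 ^ k * c < D -> exists S, c < mult Q S.
Proof.
move=> lt_D; have [/existsP //|/existsPn all_light] := boolP [exists S, c < mult Q S].
have le_mult S : predT S -> mult Q S <= c by rewrite leqNgt; move: (all_light S).
by have := sum_le_card_mul le_mult; rewrite sum_mult card_sets leqNgt lt_D.
Qed.

Section Maximality.

Variable Q : tfamily k D.
Hypothesis hQ : in_h1 Q.

Lemma maximal_bad_choice i t : t \notin Q i ->
  exists w, [/\ w i = t, forall x, x != i -> w x \in Q x & bad w].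
Proof.
move=> tNQi; have [w not_propA_w] := not_all_ex_not _ _ (hQ.2 i t tNQi).
have [w_add Nw_good] := imply_to_and _ _ not_propA_w.
have w_Q x : x != i -> w x \in Q x.
  by move=> /negbTE xNi; move: (w_add x); rewrite /add_to ffunE xNi.
have bad_w : bad w.
  by move=> j; apply/negP => /andP [lt02 le0k]; apply: Nw_good; exists j.
exists w; split=> //; apply/eqP; apply: contraT => wiNt; exfalso.
apply: (propA_not_bad hQ.1 _ bad_w) => x.
have [->|/w_Q //] := eqVneq x i.
by move: (w_add i); rewrite /add_to ffunE eqxx in_setU1 (negbTE wiNt).
Qed.

Lemma mult_le_notin_ones i : ones k \notin Q i -> mult Q (Q i) <= (k * (2 * k)).+1.
Proof.
move=> oNQi; have [w [wi w_Q bad_w]] := maximal_bad_choice oNQi.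
suff sub : [set b | Q b == Q i] \subset i |: deviant w.
  apply: leq_trans (subset_leq_card sub) _; rewrite cardsU1.
  by have := card_deviant bad_w; case: (i \notin _) => /=; lia.
apply/subsetP => b; rewrite inE in_setU1 => /eqP Qb.
have [//|bNi] := eqVneq b i; apply/negPn/negP => bNdev.
have wb_light j : cnt w j 0 <= k -> w b j = w i j.
  move=> le0k; apply: val_inj; rewrite /= wi ones_val; apply/eqP.
  by apply: contraNT bNdev => wbN1; apply/bigcupP; exists j; rewrite ?inE.
have bad_w' : bad (set_choice w i (w b)).
  by apply: bad_set_choice => // j _; rewrite wi ones_val.
apply: (propA_not_bad hQ.1 _ bad_w') => x; rewrite /set_choice.
by have [->|/w_Q //] := eqVneq x i; rewrite -Qb w_Q.
Qed.

Lemma mult_le_separated i t (T : {set trit k}) :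
  t \in T -> t \notin Q i -> ones k \in Q i -> ones k \in T -> mult Q T <= mult_bound k.
Proof.
move=> tT tNQi oQi oT; have [w [wi w_Q bad_w]] := maximal_bad_choice tNQi.
suff sub : [set b | Q b == T] \subset deviant w :|: critical w.
  apply: leq_trans (subset_leq_card sub) _; apply: leq_trans (leq_card_setU _ _).1 _.
  exact: leq_add (card_deviant bad_w) (card_critical w).
apply/subsetP => b; rewrite !inE => /eqP Qb.
apply/negPn/negP; rewrite negb_or => /andP [bNdev bNcrit].
have bNi : b != i by apply: contraNneq tNQi => <-; rewrite Qb.
set w1 := set_choice w b (ones k).
have bad_w1 : bad w1.
  apply: bad_set_choice => // j.
    move=> le0k; apply: val_inj; rewrite /= ones_val; apply/esym/eqP.
    by apply: contraNT bNdev => wbN1; apply/bigcupP; exists j; rewrite ?inE.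
  move=> lt0k wb0; right; suff : cnt w j 0 != k.+1 by lia.
  by apply: contraNneq bNcrit => e; apply/bigcupP; exists j; rewrite ?inE ?e ?wb0.
(* The transposition of [i] and [b] preserves all counts and moves [t] into
   the class [T] of [b] and 1...1 into [Q i]. *)
apply: (propA_not_bad hQ.1 _ (bad_perm (tperm i b) bad_w1)) => x /=.
rewrite /w1 /set_choice.
have [->|xNi] := eqVneq x i; first by rewrite tpermL eqxx.
have [->|xNb] := eqVneq x b; first by rewrite tpermR eq_sym (negbTE bNi) wi Qb.
by rewrite tpermD ?(negbTE xNb) ?w_Q // eq_sym.
Qed.

Lemma ones_in_heavy S : 0 < k -> mult_bound k < mult Q S -> ones k \in S.
Proof.
move=> k_gt0 heavy; have [i QiS] := class_of_mult_gt0 (leq_ltn_trans (leq0n _) heavy).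
subst S; apply: contraLR heavy => oNQi; rewrite -leqNgt.
by apply: leq_trans (mult_le_notin_ones oNQi) _; rewrite /mult_bound; nia.
Qed.

Lemma heavy_ones_uniq (S T : {set trit k}) : ones k \in S -> ones k \in T ->
  mult_bound k < mult Q S -> mult_bound k < mult Q T -> S = T.
Proof.
wlog /subsetPn [t tS tNT] : S T / ~~ (S \subset T) => [gen|] oS oT hS hT.
  have [ST|] := boolP (S \subset T); last by move/gen; apply.
  have [TS|/gen TS_neq] := boolP (T \subset S); first by apply/eqP; rewrite eqEsubset ST TS.
  by rewrite (TS_neq oT oS hT hS).
have [i QiT] := class_of_mult_gt0 (leq_ltn_trans (leq0n _) hT).
rewrite -QiT in tNT oT.
by have := mult_le_separated tS tNT oT oS; rewrite leqNgt hS.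
Qed.

Lemma mult_heavy_ge P : 0 < k -> mult_bound k < mult Q P ->
  D - 2 ^ 3 ^ k * mult_bound k <= mult Q P.
Proof.
move=> k_gt0 hP.
have light S : S != P -> mult Q S <= mult_bound k.
  move=> SNP; rewrite leqNgt; apply: contra SNP => hS; apply/eqP.
  by apply: (heavy_ones_uniq _ _ hS hP); apply: ones_in_heavy.
have le_rest : \sum_(S | S != P) mult Q S <= 2 ^ 3 ^ k * mult_bound k.
  by rewrite -card_sets; apply: sum_le_card_mul.
have := sum_mult Q; rewrite (bigD1 P) //= => sumD.
by rewrite -[X in X - _]sumD leq_subLR addnC leq_add2r.
Qed.

End Maximality.

End Choices.

Lemma mult_bound_le_exp4 k : 0 < k -> mult_bound k <= 4 ^ k.
Proof.
elim: k => [//|[|k] IH _ //]; have := IH isT.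
by rewrite /mult_bound (expnS 4 k.+1); nia.
Qed.

Lemma exp3_add_le_exp4 k : 2 <= k -> 3 ^ k + 2 * k <= 4 ^ k.
Proof.
elim: k => [//|[|[|k]] IH _ //]; have := IH isT.
by rewrite !(expnS _ k.+2); lia.
Qed.

Lemma card_sets_mul_bound k : 2 <= k -> 2 ^ 3 ^ k * mult_bound k <= 2 ^ 4 ^ k.
Proof.
move=> k_ge2; apply: (@leq_trans (2 ^ 3 ^ k * 2 ^ (2 * k))).
  by rewrite leq_pmul2l ?expn_gt0 // expnM; apply: mult_bound_le_exp4 (ltnW k_ge2).
by rewrite -expnD leq_pexp2l ?exp3_add_le_exp4.
Qed.

Theorem lemma5 (k D : nat) (Q : tfamily k D) :
  2 <= k -> 2 ^ (4 ^ k + 1) <= D -> in_h1 Q ->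
  exists P : {set trit k},
    [/\ exists i : 'I_D, Q i = P,
        D - 2 ^ (4 ^ k) <= mult Q P,
        ones k \in P &
        forall P' : {set trit k},
          (exists i : 'I_D, Q i = P') ->
          D - 2 ^ (4 ^ k) <= mult Q P' -> ones k \in P' -> P' = P].
Proof.
move=> k_ge2 hD hQ; have k_gt0 : 0 < k := ltnW k_ge2.
set M := 2 ^ 4 ^ k.
have sets_M : 2 ^ 3 ^ k * mult_bound k <= M := card_sets_mul_bound k_ge2.
have bound_M : mult_bound k < M.
  exact: leq_ltn_trans (mult_bound_le_exp4 k_gt0) (ltn_expl _ (ltnSn 1)).
have two_M : 2 * M <= D by move: hD; rewrite addn1 expnS.
have heavy S : D - M <= mult Q S -> mult_bound k < mult Q S by lia.
have M_lt_D : M < D by lia.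
have [P hP] := exists_heavy Q (leq_ltn_trans sets_M M_lt_D).
have oP := ones_in_heavy hQ k_gt0 hP.
exists P; split=> //.
- exact: class_of_mult_gt0 (leq_ltn_trans (leq0n _) hP).
- exact: leq_trans (leq_sub2l D sets_M) (mult_heavy_ge hQ k_gt0 hP).
- by move=> P' _ /heavy hP' oP'; apply: (heavy_ones_uniq hQ oP' oP hP' hP).
Qed.
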